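(* Consider Scheme 3 below with nonnegative initial data $f_i^0\ge0$ ($i=0,\dots,M$), and fixed $h=1/M$ and $\tau>0$ (no restriction on the ratio $\tau/h^2$). Then the solution is nonnegative and, as $n\to\infty$, $$f_i^n\to0\ \ (i=1,\dots,M-1),\qquad \tfrac h2 f_0^n+\tfrac h2 f_M^n\to P_0,\qquad \tfrac h2 x_Mf_M^n\to E_0,$$ so that $\tfrac h2 f_0^n\to P_0-E_0$ and $\tfrac h2 f_M^n\to E_0$.
   Context: Let $M\ge2$ be an integer, $h=1/M$, $x_i=ih$ ($x_M=1$), $\tau>0$, $D_i=x_i(1-x_i)$, $\gamma=\tau/h^2$. Scheme 3: given $f^n_0,\dots,f^n_M$, the values $f^{n+1}$ satisfy $$\frac{f^{n+1}_i-f^{n}_i}{\tau}-\frac{D_{i+1}f^{n+1}_{i+1}-2D_{i}f^{n+1}_{i}+D_{i-1}f^{n+1}_{i-1}}{h^2}=0\quad(i=1,\dots,M-1),$$ $$f^{n+1}_0=f^{n}_0+2D_1\gamma f^{n+1}_1,\qquad f^{n+1}_M=f^{n}_M+2D_{M-1}\gamma f^{n+1}_{M-1}.$$ Initial discrete probability and expectation: $P_0=\tfrac h2 f_0^0+\tfrac h2 f_M^0+\sum_{i=1}^{M-1}f_i^0h$, $E_0=\tfrac h2 x_Mf_M^0+\sum_{i=1}^{M-1}x_if_i^0h$. *)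

From Stdlib Require Import Reals Lra Lia.
Open Scope R_scope.

Fixpoint sumR (g : nat -> R) (a n : nat) : R :=
  match n with
  | O => 0
  | S k => sumR g a k + g (a + k)%nat
  end.

Definition hh (M : nat) : R := 1 / INR M.
Definition xx (M i : nat) : R := INR i * hh M.
Definition DD (M i : nat) : R := xx M i * (1 - xx M i).
Definition gam (M : nat) (tau : R) : R := tau / (hh M ^ 2).

(* f n i = f^n_i.  Scheme 3 relating step n and step n+1. *)
Definition scheme3_step (M : nat) (tau : R) (f : nat -> nat -> R) (n : nat) : Prop :=
  (forall i : nat, (1 <= i <= M - 1)%nat ->
     (f (S n) i - f n i) / tau
     - (DD M (i + 1) * f (S n) (i + 1)%nat - 2 * DD M i * f (S n) i
        + DD M (i - 1) * f (S n) (i - 1)%nat) / (hh M ^ 2) = 0)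
  /\ f (S n) 0%nat = f n 0%nat + 2 * DD M 1 * gam M tau * f (S n) 1%nat
  /\ f (S n) M = f n M + 2 * DD M (M - 1) * gam M tau * f (S n) (M - 1)%nat.

Definition P0 (M : nat) (f0 : nat -> R) : R :=
  hh M / 2 * f0 0%nat + hh M / 2 * f0 M + sumR (fun i => f0 i * hh M) 1 (M - 1).
Definition E0 (M : nat) (f0 : nat -> R) : R :=
  hh M / 2 * xx M M * f0 M + sumR (fun i => xx M i * f0 i * hh M) 1 (M - 1).

From Stdlib Require Import Reals Lra Lia.
Open Scope R_scope.

(* Write the interior equations as (I + gam A) f^{n+1} = f^n, where A is the
   second difference of D f.  Since D vanishes at both ends, the boundary values
   never enter A, and minimising D_j g_j over the interior gives a discrete
   minimum principle for I + gam A.  As 2 D_i - D_{i+1} - D_{i-1} = 2 h^2, the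
   operator maps a constant c to (1 + 2 tau) c, so comparing f^n with the
   constant (1 + 2 tau)^{-n} max f^0 shows that the interior values are
   nonnegative and decay geometrically.  The boundary updates are exactly what
   is needed to make the discrete mass and first moment telescope, so both are
   conserved; as the interior values vanish, both end up on the endpoints. *)

Lemma sumR_ext (F G : nat -> R) (a n : nat) :
  (forall i, (a <= i < a + n)%nat -> F i = G i) -> sumR F a n = sumR G a n.
Proof.
induction n as [|n IH]; intros H; simpl; [reflexivity|].
rewrite IH, H; [reflexivity|lia|intros; apply H; lia].
Qed.

Lemma sumR_add (F G : nat -> R) (a n : nat) :
  sumR (fun i => F i + G i) a n = sumR F a n + sumR G a n.
Proof. induction n as [|n IH]; simpl; [ring|]. rewrite IH; ring. Qed.

Lemma sumR_scal (c : R) (F : nat -> R) (a n : nat) :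
  sumR (fun i => c * F i) a n = c * sumR F a n.
Proof. induction n as [|n IH]; simpl; [ring|]. rewrite IH; ring. Qed.

Lemma sumR_second_diff (u : nat -> R) (n : nat) :
  sumR (fun i => u (i + 1)%nat - 2 * u i + u (i - 1)%nat) 1 n
  = (u (n + 1)%nat - u n) - (u 1%nat - u 0%nat).
Proof.
induction n as [|n IH]; simpl sumR; [simpl; ring|].
rewrite IH.
replace (S (n + 1)) with (S n + 1)%nat by lia.
replace (n - 0)%nat with n by lia.
replace (n + 1)%nat with (S n) by lia.
ring.
Qed.

Lemma sumR_id_second_diff (u : nat -> R) (n : nat) :
  sumR (fun i => INR i * (u (i + 1)%nat - 2 * u i + u (i - 1)%nat)) 1 n
  = INR n * (u (n + 1)%nat - u n) - u n + u 0%nat.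
Proof.
induction n as [|n IH]; cbn [sumR]; [simpl; ring|].
rewrite IH.
replace (1 + n)%nat with (S n) by lia.
replace (S n - 1)%nat with n by lia.
replace (n + 1)%nat with (S n) by lia.
rewrite S_INR; ring.
Qed.

Lemma exists_argmin_nat (phi : nat -> R) (a b : nat) : (a <= b)%nat ->
  exists k, (a <= k <= b)%nat /\ forall j, (a <= j <= b)%nat -> phi k <= phi j.
Proof.
intros Hab; replace b with (a + (b - a))%nat by lia.
induction (b - a)%nat as [|n [k [Hk Hmin]]].
- exists a; split; [lia|]; intros j Hj.
  replace j with a by lia; lra.
- destruct (Rle_dec (phi k) (phi (a + S n)%nat)) as [Hle|Hgt].
  + exists k; split; [lia|]; intros j Hj.
    destruct (Nat.eq_dec j (a + S n)) as [->|Hne]; [exact Hle|].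
    apply Hmin; lia.
  + exists (a + S n)%nat; split; [lia|]; intros j Hj.
    destruct (Nat.eq_dec j (a + S n)) as [->|Hne]; [lra|].
    specialize (Hmin j ltac:(lia)); lra.
Qed.

Lemma Un_cv_ext (u v : nat -> R) (l : R) :
  (forall n, u n = v n) -> Un_cv u l -> Un_cv v l.
Proof.
intros E H eps Heps; destruct (H eps Heps) as [N HN].
exists N; intros n Hn; rewrite <- E; auto.
Qed.

Lemma Un_cv_const (c : R) : Un_cv (fun _ => c) c.
Proof.
intros eps Heps; exists 0%nat; intros n _.
unfold R_dist; rewrite Rminus_diag, Rabs_R0; exact Heps.
Qed.

Lemma Un_cv_pow_0 (r : R) : Rabs r < 1 -> Un_cv (fun n => r ^ n) 0.
Proof.
intros Hr eps Heps; destruct (pow_lt_1_zero r Hr eps Heps) as [N HN].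
exists N; intros n Hn; unfold R_dist; rewrite Rminus_0_r; auto.
Qed.

Lemma Un_cv_squeeze_0 (u v : nat -> R) :
  (forall n, 0 <= u n <= v n) -> Un_cv v 0 -> Un_cv u 0.
Proof.
intros Huv Hv eps Heps; destruct (Hv eps Heps) as [N HN].
exists N; intros n Hn; specialize (HN n Hn); specialize (Huv n).
unfold R_dist in *; rewrite Rminus_0_r in *.
rewrite Rabs_pos_eq in * by lra; lra.
Qed.

Lemma Un_cv_scal_0 (c : R) (u : nat -> R) :
  Un_cv u 0 -> Un_cv (fun n => c * u n) 0.
Proof.
intros Hu; rewrite <- (Rmult_0_r c).
exact (CV_mult _ _ _ _ (Un_cv_const c) Hu).
Qed.

Lemma Un_cv_sub_0 (c : R) (u : nat -> R) :
  Un_cv u 0 -> Un_cv (fun n => c - u n) c.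
Proof.
intros Hu; assert (H := CV_minus _ _ _ _ (Un_cv_const c) Hu).
rewrite Rminus_0_r in H; exact H.
Qed.

Lemma Un_cv_sumR_0 (g : nat -> nat -> R) (a k : nat) :
  (forall i, (a <= i < a + k)%nat -> Un_cv (fun n => g n i) 0) ->
  Un_cv (fun n => sumR (g n) a k) 0.
Proof.
induction k as [|k IH]; intros Hg; simpl.
- apply Un_cv_const.
- rewrite <- (Rplus_0_r 0).
  apply CV_plus; [apply IH|apply Hg]; intros; try apply Hg; lia.
Qed.

Lemma hh_pos (M : nat) : (0 < M)%nat -> 0 < hh M.
Proof.
intros HM; unfold hh; apply Rdiv_lt_0_compat; [lra|].
apply lt_0_INR; exact HM.
Qed.

Lemma INR_mul_hh (M : nat) : (0 < M)%nat -> INR M * hh M = 1.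
Proof.
intros HM; unfold hh; assert (0 < INR M) by (apply lt_0_INR; exact HM).
field; lra.
Qed.

Lemma xx_last (M : nat) : (0 < M)%nat -> xx M M = 1.
Proof. apply INR_mul_hh. Qed.

Lemma DD_first (M : nat) : DD M 0 = 0.
Proof. unfold DD, xx; simpl; ring. Qed.

Lemma DD_last (M : nat) : (0 < M)%nat -> DD M M = 0.
Proof. intros HM; unfold DD; rewrite xx_last by exact HM; ring. Qed.

Lemma DD_interior_pos (M i : nat) : (1 <= i <= M - 1)%nat -> 0 < DD M i.
Proof.
intros Hi; unfold DD, xx.
assert (Hh := hh_pos M ltac:(lia)); assert (HMh := INR_mul_hh M ltac:(lia)).
assert (0 < INR i) by (apply lt_0_INR; lia).
assert (INR i < INR M) by (apply lt_INR; lia).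
assert (0 < INR i * hh M) by nra.
assert (INR i * hh M < 1) by nra.
nra.
Qed.

Lemma DD_second_diff (M i : nat) : (1 <= i)%nat ->
  2 * DD M i - DD M (i + 1) - DD M (i - 1) = 2 * hh M ^ 2.
Proof. intros Hi; unfold DD, xx; rewrite plus_INR, minus_INR by lia; simpl; ring. Qed.

Lemma gam_pos (M : nat) (tau : R) : (0 < M)%nat -> 0 < tau -> 0 < gam M tau.
Proof.
intros HM Ht; unfold gam; apply Rdiv_lt_0_compat; [exact Ht|].
apply pow_lt, hh_pos, HM.
Qed.

Lemma gam_mul_hh2 (M : nat) (tau : R) : (0 < M)%nat -> gam M tau * hh M ^ 2 = tau.
Proof. intros HM; assert (Hh := hh_pos M HM); unfold gam; field; lra. Qed.

Definition scheme3_op (M : nat) (tau : R) (g : nat -> R) (i : nat) : R :=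
  g i + gam M tau
        * (2 * DD M i * g i - DD M (i + 1) * g (i + 1)%nat - DD M (i - 1) * g (i - 1)%nat).

Lemma scheme3_op_const_sub (M : nat) (tau c : R) (g : nat -> R) (i : nat) :
  (0 < M)%nat -> (1 <= i)%nat ->
  scheme3_op M tau (fun j => c - g j) i = (1 + 2 * tau) * c - scheme3_op M tau g i.
Proof.
intros HM Hi.
assert (Hgh := gam_mul_hh2 M tau HM); assert (HD := DD_second_diff M i Hi).
transitivity (c * (1 + gam M tau * (2 * DD M i - DD M (i + 1) - DD M (i - 1)))
              - scheme3_op M tau g i); [unfold scheme3_op; ring|].
rewrite HD; replace (2 * tau) with (2 * (gam M tau * hh M ^ 2)) by (rewrite Hgh; ring).
ring.
Qed.

(* At an interior minimiser k of D_j w_j the second difference of D w is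
   nonnegative (D_0 = D_M = 0 covers the neighbours on the boundary), so
   D_k w_k < 0 would make scheme3_op w k negative. *)
Lemma scheme3_op_min_principle (M : nat) (tau : R) (w : nat -> R) :
  (2 <= M)%nat -> 0 < tau ->
  (forall i, (1 <= i <= M - 1)%nat -> 0 <= scheme3_op M tau w i) ->
  forall i, (1 <= i <= M - 1)%nat -> 0 <= w i.
Proof.
intros HM Ht Hop.
destruct (exists_argmin_nat (fun j => DD M j * w j) 1 (M - 1) ltac:(lia))
  as [k [Hk Hmin]]; simpl in Hmin.
destruct (Rlt_le_dec (DD M k * w k) 0) as [Hneg|Hnonneg].
- exfalso.
  assert (Hright : DD M k * w k <= DD M (k + 1) * w (k + 1)%nat).
  { destruct (Nat.eq_dec (k + 1) M) as [->|Hne]; [rewrite DD_last by lia; lra|].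
    apply Hmin; lia. }
  assert (Hleft : DD M k * w k <= DD M (k - 1) * w (k - 1)%nat).
  { destruct (Nat.eq_dec (k - 1) 0) as [->|Hne]; [rewrite DD_first; lra|].
    apply Hmin; lia. }
  assert (HDk := DD_interior_pos M k Hk).
  assert (Hwk : w k < 0) by (destruct (Rlt_le_dec (w k) 0); [assumption|nra]).
  assert (Hg := gam_pos M tau ltac:(lia) Ht).
  specialize (Hop k Hk); unfold scheme3_op in Hop.
  nra.
- intros i Hi; specialize (Hmin i Hi).
  assert (HDi := DD_interior_pos M i Hi).
  destruct (Rlt_le_dec (w i) 0); nra.
Qed.

Section Scheme3.

Variables (M : nat) (tau : R) (f : nat -> nat -> R).
Hypothesis HM : (2 <= M)%nat.
Hypothesis Htau : 0 < tau.
Hypothesis Hstep : forall n, scheme3_step M tau f n.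
Hypothesis Hinit : forall i, (i <= M)%nat -> 0 <= f 0%nat i.

Lemma scheme3_increment (n i : nat) : (1 <= i <= M - 1)%nat ->
  f (S n) i - f n i
  = gam M tau * (DD M (i + 1) * f (S n) (i + 1)%nat - 2 * (DD M i * f (S n) i)
                 + DD M (i - 1) * f (S n) (i - 1)%nat).
Proof.
intros Hi; destruct (Hstep n) as [Hint _]; specialize (Hint i Hi).
assert (Hh := hh_pos M ltac:(lia)).
set (lap := DD M (i + 1) * f (S n) (i + 1)%nat - 2 * DD M i * f (S n) i
            + DD M (i - 1) * f (S n) (i - 1)%nat) in Hint.
unfold gam.
replace (f (S n) i - f n i) with (tau * ((f (S n) i - f n i) / tau)) by (field; lra).
apply Rminus_diag_uniq in Hint; rewrite Hint.
unfold lap; field; lra.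
Qed.

Lemma scheme3_op_step (n i : nat) : (1 <= i <= M - 1)%nat ->
  scheme3_op M tau (f (S n)) i = f n i.
Proof.
intros Hi; assert (E := scheme3_increment n i Hi).
unfold scheme3_op; lra.
Qed.

Lemma scheme3_nonneg (n i : nat) : (i <= M)%nat -> 0 <= f n i.
Proof.
revert i; induction n as [|n IH]; [exact Hinit|].
assert (Hint : forall j, (1 <= j <= M - 1)%nat -> 0 <= f (S n) j).
{ apply (scheme3_op_min_principle M tau); [exact HM|exact Htau|].
  intros j Hj; rewrite scheme3_op_step by exact Hj; apply IH; lia. }
destruct (Hstep n) as [_ [Hleft Hright]].
assert (Hg := gam_pos M tau ltac:(lia) Htau).
intros i Hi.
destruct (Nat.eq_dec i 0) as [->|Hi0]; [|destruct (Nat.eq_dec i M) as [->|HiM]].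
- rewrite Hleft.
  assert (HD := DD_interior_pos M 1 ltac:(lia)).
  assert (Hf1 := Hint 1%nat ltac:(lia)); assert (Hf0 := IH 0%nat ltac:(lia)).
  assert (0 <= 2 * DD M 1 * gam M tau * f (S n) 1%nat) by (apply Rmult_le_pos; [apply Rmult_le_pos|]; lra).
  lra.
- rewrite Hright.
  assert (HD := DD_interior_pos M (M - 1) ltac:(lia)).
  assert (Hf1 := Hint (M - 1)%nat ltac:(lia)); assert (HfM := IH M ltac:(lia)).
  assert (0 <= 2 * DD M (M - 1) * gam M tau * f (S n) (M - 1)%nat)
    by (apply Rmult_le_pos; [apply Rmult_le_pos|]; lra).
  lra.
- apply Hint; lia.
Qed.

Lemma scheme3_interior_le_geometric (K : R) :
  (forall i, (1 <= i <= M - 1)%nat -> f 0%nat i <= K) ->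
  forall n i, (1 <= i <= M - 1)%nat -> f n i <= K * (/ (1 + 2 * tau)) ^ n.
Proof.
intros HK n; induction n as [|n IH]; intros i Hi; [simpl; rewrite Rmult_1_r; auto|].
set (rho := / (1 + 2 * tau)) in *.
enough (0 <= K * rho ^ S n - f (S n) i) by lra.
apply (scheme3_op_min_principle M tau (fun j => K * rho ^ S n - f (S n) j) HM Htau);
  [|exact Hi].
intros j Hj; rewrite scheme3_op_const_sub, scheme3_op_step by lia.
replace ((1 + 2 * tau) * (K * rho ^ S n)) with (K * rho ^ n)
  by (unfold rho; simpl; field; lra).
specialize (IH j Hj); lra.
Qed.

Lemma scheme3_interior_cv_0 (i : nat) : (1 <= i <= M - 1)%nat ->
  Un_cv (fun n => f n i) 0.
Proof.
intros Hi.
destruct (exists_argmin_nat (fun j => - f 0%nat j) 1 (M - 1) ltac:(lia))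
  as [k [_ Hk]]; simpl in Hk.
apply (Un_cv_squeeze_0 _ (fun n => f 0%nat k * (/ (1 + 2 * tau)) ^ n)).
- intros n; split; [apply scheme3_nonneg; lia|].
  apply scheme3_interior_le_geometric; [|exact Hi].
  intros j Hj; specialize (Hk j Hj); lra.
- apply (Un_cv_scal_0 _ (fun n => _ ^ n)), Un_cv_pow_0.
  rewrite Rabs_pos_eq by (left; apply Rinv_0_lt_compat; lra).
  rewrite <- Rinv_1; apply Rinv_lt_contravar; lra.
Qed.

Lemma scheme3_interior_mass_step (n : nat) :
  sumR (fun i => f (S n) i * hh M) 1 (M - 1)
  = sumR (fun i => f n i * hh M) 1 (M - 1)
    - hh M * gam M tau
      * (DD M 1 * f (S n) 1%nat + DD M (M - 1) * f (S n) (M - 1)%nat).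
Proof.
set (u := fun j => DD M j * f (S n) j).
rewrite (sumR_ext _ (fun i => f n i * hh M
                             + hh M * gam M tau * (u (i + 1)%nat - 2 * u i + u (i - 1)%nat))).
- rewrite sumR_add, sumR_scal, sumR_second_diff.
  replace (M - 1 + 1)%nat with M by lia.
  unfold u; rewrite DD_last, DD_first by lia; ring.
- intros i Hi; assert (E := scheme3_increment n i ltac:(lia)).
  replace (f (S n) i * hh M) with ((f (S n) i - f n i) * hh M + f n i * hh M) by ring.
  rewrite E; unfold u; ring.
Qed.

Lemma scheme3_interior_moment_step (n : nat) :
  sumR (fun i => xx M i * f (S n) i * hh M) 1 (M - 1)
  = sumR (fun i => xx M i * f n i * hh M) 1 (M - 1)
    - hh M * gam M tau * DD M (M - 1) * f (S n) (M - 1)%nat.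
Proof.
set (u := fun j => DD M j * f (S n) j).
rewrite (sumR_ext _ (fun i => xx M i * f n i * hh M
   + hh M * hh M * gam M tau * (INR i * (u (i + 1)%nat - 2 * u i + u (i - 1)%nat)))).
- rewrite sumR_add, sumR_scal, sumR_id_second_diff.
  replace (M - 1 + 1)%nat with M by lia.
  unfold u; rewrite DD_last, DD_first, minus_INR by lia.
  assert (Hh := hh_pos M ltac:(lia)).
  replace (INR M) with (/ hh M)
    by (apply (Rmult_eq_reg_r (hh M)); [rewrite INR_mul_hh by lia; field|]; lra).
  simpl INR; field; lra.
- intros i Hi; assert (E := scheme3_increment n i ltac:(lia)).
  replace (xx M i * f (S n) i * hh M)
    with (xx M i * (f (S n) i - f n i) * hh M + xx M i * f n i * hh M) by ring.
  rewrite E; unfold u, xx; ring.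
Qed.

Lemma scheme3_mass_conserved (n : nat) :
  hh M / 2 * f n 0%nat + hh M / 2 * f n M + sumR (fun i => f n i * hh M) 1 (M - 1)
  = P0 M (f 0%nat).
Proof.
induction n as [|n IH]; [reflexivity|].
rewrite <- IH, scheme3_interior_mass_step.
destruct (Hstep n) as [_ [Hleft Hright]]; rewrite Hleft, Hright; field.
Qed.

Lemma scheme3_moment_conserved (n : nat) :
  hh M / 2 * xx M M * f n M + sumR (fun i => xx M i * f n i * hh M) 1 (M - 1)
  = E0 M (f 0%nat).
Proof.
induction n as [|n IH]; [reflexivity|].
rewrite <- IH, scheme3_interior_moment_step.
destruct (Hstep n) as [_ [_ Hright]]; rewrite Hright, xx_last by lia; field.
Qed.

Lemma scheme3_boundary_mass_cv :
  Un_cv (fun n => hh M / 2 * f n 0%nat + hh M / 2 * f n M) (P0 M (f 0%nat)).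
Proof.
apply (Un_cv_ext (fun n => P0 M (f 0%nat) - sumR (fun i => f n i * hh M) 1 (M - 1))).
{ intros n; rewrite <- (scheme3_mass_conserved n); ring. }
apply Un_cv_sub_0, Un_cv_sumR_0; intros i Hi.
apply (Un_cv_ext (fun n => hh M * f n i)); [intros; ring|].
apply Un_cv_scal_0, scheme3_interior_cv_0; lia.
Qed.

Lemma scheme3_boundary_moment_cv :
  Un_cv (fun n => hh M / 2 * xx M M * f n M) (E0 M (f 0%nat)).
Proof.
apply (Un_cv_ext (fun n => E0 M (f 0%nat) - sumR (fun i => xx M i * f n i * hh M) 1 (M - 1))).
{ intros n; rewrite <- (scheme3_moment_conserved n); ring. }
apply Un_cv_sub_0, Un_cv_sumR_0; intros i Hi.
apply (Un_cv_ext (fun n => xx M i * hh M * f n i)); [intros; ring|].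
apply Un_cv_scal_0, scheme3_interior_cv_0; lia.
Qed.

End Scheme3.

Theorem theorem3 (M : nat) (tau : R) (f : nat -> nat -> R) :
  (2 <= M)%nat -> 0 < tau ->
  (forall i : nat, (i <= M)%nat -> 0 <= f 0%nat i) ->
  (forall n : nat, scheme3_step M tau f n) ->
  (forall n i : nat, (i <= M)%nat -> 0 <= f n i)
  /\ (forall i : nat, (1 <= i <= M - 1)%nat -> Un_cv (fun n => f n i) 0)
  /\ Un_cv (fun n => hh M / 2 * f n 0%nat + hh M / 2 * f n M) (P0 M (f 0%nat))
  /\ Un_cv (fun n => hh M / 2 * xx M M * f n M) (E0 M (f 0%nat))
  /\ Un_cv (fun n => hh M / 2 * f n 0%nat) (P0 M (f 0%nat) - E0 M (f 0%nat))
  /\ Un_cv (fun n => hh M / 2 * f n M) (E0 M (f 0%nat)).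
Proof.
intros HM Htau Hinit Hstep.
assert (Hmass := scheme3_boundary_mass_cv M tau f HM Htau Hstep Hinit).
assert (Hmoment := scheme3_boundary_moment_cv M tau f HM Htau Hstep Hinit).
assert (Hright : Un_cv (fun n => hh M / 2 * f n M) (E0 M (f 0%nat))).
{ apply (Un_cv_ext (fun n => hh M / 2 * xx M M * f n M)); [|exact Hmoment].
  intros n; rewrite xx_last by lia; ring. }
repeat split; try assumption.
- intros n i Hi; apply (scheme3_nonneg M tau f); assumption.
- intros i Hi; apply (scheme3_interior_cv_0 M tau f); assumption.
- apply (Un_cv_ext (fun n => (hh M / 2 * f n 0%nat + hh M / 2 * f n M) - hh M / 2 * f n M));
    [intros; ring|].
  apply CV_minus; assumption.
Qed.
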